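(* For every natural number $\bar{q} > 1$ there exist two non-isomorphic bipartite graphs $G_\mathrm{b} = (L,R,E_\mathrm{b})$ and $G_\mathrm{e} = (L,R,E_\mathrm{e})$ on the same node sets, with the same left degree sequence, the same right degree sequence, and the same number of butterflies, $\beta(G_\mathrm{b}) = \beta(G_\mathrm{e})$, such that the following holds. Let $\langle \rho_1,\dots,\rho_z\rangle$ be any sequence of operations, where each $\rho_i$ is a $p_i$-BSO with $p_i \in \mathbb{N}^+$, such that applying $\rho_1,\dots,\rho_z$ successively to $G_\mathrm{b}$ yields $G_\mathrm{e}$, and such that every intermediate graph $G^i$ (obtained from $G_\mathrm{b}$ by applying $\rho_1,\dots,\rho_i$) has the same left and right degree sequences as $G_\mathrm{b}$ and $\beta(G^i) = \beta(G_\mathrm{b})$. Then there exists $\ell \in \{1,\dots,z\}$ with $p_\ell \ge \bar{q}$.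
   Context: A bipartite graph is a triple $G=(L,R,E)$ with $L,R$ disjoint finite node sets and $E \subseteq L\times R$; edges are undirected and written $(u,a)$ with $u\in L$, $a \in R$. $N_G(v)$ denotes the set of neighbors of $v$ and $\deg_G(v)=|N_G(v)|$. With fixed labelings $u_1,\dots,u_{|L|}$ of $L$ and $a_1,\dots,a_{|R|}$ of $R$, the left (right) degree sequence is $(\deg_G(u_1),\dots,\deg_G(u_{|L|}))$ (resp. $(\deg_G(a_1),\dots,\deg_G(a_{|R|}))$). A butterfly in $G$ is a set $\{u,v,a,b\}$ with $u\neq v \in L$, $a \neq b \in R$ and $\{(u,a),(u,b),(v,a),(v,b)\}\subseteq E$; $\beta(G)$ denotes the number of butterflies in $G$. For $q\in\mathbb{N}^+$, a $q$-edge bipartite swap operation ($q$-BSO) on $G$ is a pair $(S,\sigma)$ where $S=(e_1,\dots,e_q)$ is a vector of $q$ distinct edges $e_i=(u_i,a_i)\in E$ and $\sigma$ is a derangement of $\{1,\dots,q\}$ (a permutation with no fixed point) such that $(u_j,a_{\sigma(j)})\notin E$ for every $j$; applying it produces the graph $(L,R,(E\setminus S)\cup\{(u_j,a_{\sigma(j)}): 1\le j\le q\})$, which has the same left and right degree sequences as $G$. *)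

From mathcomp Require Import all_boot all_order all_fingroup.
Set Implicit Arguments. Unset Strict Implicit. Unset Printing Implicit Defensive.

(* A bipartite graph with L = 'I_m, R = 'I_n is given by its edge set
   E : {set 'I_m * 'I_n}; (u, a) \in E means u in L is adjacent to a in R. *)
Notation bgraph m n := {set 'I_m * 'I_n}.

Definition ldeg m n (E : bgraph m n) (u : 'I_m) : nat := #|[set a | (u, a) \in E]|.
Definition rdeg m n (E : bgraph m n) (a : 'I_n) : nat := #|[set u | (u, a) \in E]|.

(* same left and same right degree sequences (w.r.t. the fixed labelings) *)
Definition same_degseqs m n (E1 E2 : bgraph m n) : Prop :=
  (forall u, ldeg E1 u = ldeg E2 u) /\ (forall a, rdeg E1 a = rdeg E2 a).

(* number of butterflies: sets {u,v,a,b}, u<>v in L, a<>b in R, all four edges present;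
   encoded as pairs ({u,v},{a,b}) of 2-subsets *)
Definition butterflies m n (E : bgraph m n) : nat :=
  #|[set X : {set 'I_m} * {set 'I_n} |
       [&& #|X.1| == 2, #|X.2| == 2 & setX X.1 X.2 \subset E]]|.

Definition bisomorphic m n (E1 E2 : bgraph m n) : Prop :=
  exists (f : {perm 'I_m}) (g : {perm 'I_n}),
    forall u a, ((u, a) \in E1) = ((f u, g a) \in E2).

Definition is_bso m n (E : bgraph m n) q (S : 'I_q -> 'I_m * 'I_n) (sigma : {perm 'I_q}) : Prop :=
  injective S /\ (forall j, S j \in E) /\ (forall j, sigma j != j) /\
  (forall j, ((S j).1, (S (sigma j)).2) \notin E).

Definition apply_bso m n (E : bgraph m n) q (S : 'I_q -> 'I_m * 'I_n) (sigma : {perm 'I_q})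
  : bgraph m n :=
  (E :\: [set S j | j : 'I_q]) :|: [set ((S j).1, (S (sigma j)).2) | j : 'I_q].

Definition bso_step m n (E : bgraph m n) q (E' : bgraph m n) : Prop :=
  exists (S : 'I_q -> 'I_m * 'I_n) (sigma : {perm 'I_q}),
    is_bso E S sigma /\ apply_bso E S sigma = E'.

(* With all left degrees at most 2, a butterfly is determined by its left pair, which
   must consist of degree-2 twins; hence a graph has the maximal number C(k, 2) of
   butterflies, k the number of degree-2 left nodes, exactly when all those nodes share
   one neighbourhood.  Take R = {0, 1, 2} and L = {0, ..., 2P} with P = qbar.  In G_b
   the nodes 0..P-1 are adjacent to {0, 1} and every other left node is pendant at 2;
   in G_e the nodes 0..P-1 are adjacent to {1, 2}, the nodes P..2P-1 are pendant at 0
   and 2P is pendant at 2.  Along a walk preserving degrees and butterflies the class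
   0..P-1 keeps a common neighbourhood, which must change at some step; that step
   deletes the P edges from the class to a lost neighbour, so it moves at least P
   edges. *)

From mathcomp Require Import all_boot all_order all_fingroup.

Set Implicit Arguments. Unset Strict Implicit. Unset Printing Implicit Defensive.

Definition lnbr m n (E : bgraph m n) (u : 'I_m) : {set 'I_n} := [set a | (u, a) \in E].

Lemma ldeg_lnbr m n (E : bgraph m n) u : ldeg E u = #|lnbr E u|.
Proof. by []. Qed.

Lemma mem_lnbr m n (E : bgraph m n) u a : (a \in lnbr E u) = ((u, a) \in E).
Proof. by rewrite inE. Qed.

Definition deg2 m n (E : bgraph m n) : {set 'I_m} := [set u | ldeg E u == 2].

Definition pairs_in (T : finType) (D : {set T}) : {set {set T}} :=
  [set A : {set T} | A \subset D & #|A| == 2].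

Definition butterfly_set m n (E : bgraph m n) : {set {set 'I_m} * {set 'I_n}} :=
  [set X : {set 'I_m} * {set 'I_n} | [&& #|X.1| == 2, #|X.2| == 2 & setX X.1 X.2 \subset E]].

Section MaxLeftDegreeTwo.

Variables (m n : nat) (E : bgraph m n).
Hypothesis ldeg_le2 : forall u, ldeg E u <= 2.

Lemma butterfly_lnbr X u :
  X \in butterfly_set E -> u \in X.1 -> u \in deg2 E /\ lnbr E u = X.2.
Proof.
rewrite inE => /and3P[_ /eqP cX2 sXE] uX.
have sX2 : X.2 \subset lnbr E u.
  by apply/subsetP => a aX; rewrite inE (subsetP sXE) // inE uX.
have eX2 : X.2 = lnbr E u.
  by apply/eqP; rewrite eqEcard sX2 cX2 -ldeg_lnbr ldeg_le2.
by rewrite inE ldeg_lnbr -eX2 cX2.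
Qed.

Lemma butterfly_fst_inj : {in butterfly_set E &, injective fst}.
Proof.
move=> [A B] [A' B'] XE X'E /= eAA'; subst A'.
have /card_gt0P[u uA] : 0 < #|A| by move: XE; rewrite inE => /and3P[/eqP-> _ _].
by rewrite -[B](butterfly_lnbr XE uA).2 -[B'](butterfly_lnbr X'E uA).2.
Qed.

Lemma fst_butterfly_set_sub :
  fst @: butterfly_set E \subset pairs_in (deg2 E).
Proof.
apply/subsetP => _ /imsetP[X XE ->]; rewrite inE.
move: (XE); rewrite inE => /and3P[-> _ _]; rewrite andbT.
by apply/subsetP => u /(butterfly_lnbr XE)[].
Qed.

Lemma butterflies_maxP :
  reflect {in deg2 E &, forall u v, lnbr E u = lnbr E v}
          (butterflies E == 'C(#|deg2 E|, 2)).
Proof.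
rewrite /butterflies -/(butterfly_set E) -(card_in_imset butterfly_fst_inj).
rewrite -cards_draws -/(pairs_in _).
apply: (iffP idP) => [|twins].
  move=> /eqP card_im u v uD vD.
  have im_pairs : fst @: butterfly_set E = pairs_in (deg2 E).
    by apply/eqP; rewrite eqEcard fst_butterfly_set_sub card_im leqnn.
  have [-> // | neq_uv] := eqVneq u v.
  have : [set u; v] \in fst @: butterfly_set E.
    by rewrite im_pairs inE cards2 neq_uv subUset !sub1set uD vD.
  case/imsetP => X XE eX1.
  have [uX vX] : u \in X.1 /\ v \in X.1 by rewrite -eX1 !inE !eqxx orbT.
  by rewrite (butterfly_lnbr XE uX).2 (butterfly_lnbr XE vX).2.
rewrite eqn_leq subset_leq_card ?fst_butterfly_set_sub //=.
apply/subset_leq_card/subsetP => A; rewrite inE => /andP[sAD /eqP cA].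
have /card_gt0P[u uA] : 0 < #|A| by rewrite cA.
have uD := subsetP sAD u uA.
apply/imsetP; exists (A, lnbr E u) => //; rewrite inE cA eqxx /=.
move: (uD); rewrite inE ldeg_lnbr => ->; apply/subsetP => -[v a]; rewrite inE => /andP[/= vA].
by rewrite -(twins v u (subsetP sAD v vA) uD) inE.
Qed.

End MaxLeftDegreeTwo.

Lemma card_diff_apply_bso m n (E : bgraph m n) q S (sigma : {perm 'I_q}) :
  #|E :\: apply_bso E S sigma| <= q.
Proof.
rewrite -[q in _ <= q]card_ord; apply: leq_trans (leq_imset_card S _).
apply/subset_leq_card/subsetP => e; rewrite !inE negb_or negb_and negbK.
by case/andP=> /andP[/orP[// | /negP]].
Qed.

Lemma bso_step_card_diff m n (E E' : bgraph m n) q :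
  bso_step E q E' -> #|E :\: E'| <= q.
Proof. by case=> S [sigma [_ <-]]; apply: card_diff_apply_bso. Qed.

Lemma card_shared_lnbr_le_removed m n (E E' : bgraph m n) (D : {set 'I_m}) u0 :
  {in D, forall u, lnbr E u = lnbr E u0} -> {in D, forall u, lnbr E' u = lnbr E' u0} ->
  #|lnbr E u0| = #|lnbr E' u0| -> lnbr E u0 != lnbr E' u0 ->
  #|D| <= #|E :\: E'|.
Proof.
move=> shE shE' card_eq neq.
have [a aE aE'] : exists2 a, a \in lnbr E u0 & a \notin lnbr E' u0.
  by apply/subsetPn; apply: contra neq => sub; rewrite eqEcard sub card_eq /=.
have pair_inj : injective (fun u : 'I_m => (u, a)) by move=> u v [].
rewrite -(card_imset D pair_inj).
apply/subset_leq_card/subsetP => _ /imsetP[u uD ->].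
by rewrite in_setD -!mem_lnbr shE // shE' // aE aE'.
Qed.

Lemma exists_step_neq (T : eqType) (f : nat -> T) z :
  f 0 != f z -> exists2 i, i < z & f i != f i.+1.
Proof.
elim: z => [|z IHz] neq0z; first by rewrite eqxx in neq0z.
have [eqz | neqz] := eqVneq (f z) (f z.+1); last by exists z.
rewrite -eqz in neq0z; have [i iz neqi] := IHz neq0z.
by exists i => //; apply: ltnW.
Qed.

Lemma bso_walk_large_step m n (Eb : bgraph m n) z (G : nat -> bgraph m n)
    (p : nat -> nat) u0 :
  (forall u, ldeg Eb u <= 2) -> butterflies Eb = 'C(#|deg2 Eb|, 2) ->
  (forall i, i < z -> bso_step (G i) (p i) (G i.+1)) ->
  (forall i, i <= z -> same_degseqs (G i) Eb /\ butterflies (G i) = butterflies Eb) ->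
  u0 \in deg2 Eb -> lnbr (G 0) u0 != lnbr (G z) u0 ->
  exists2 l, l < z & #|deg2 Eb| <= p l.
Proof.
move=> ldeg_le2 bflyEb step inv u0D neq0z.
have deg2G i : i <= z -> deg2 (G i) = deg2 Eb.
  by move=> iz; apply/setP => u; rewrite !inE (inv i iz).1.1.
have twinsG i : i <= z -> {in deg2 Eb &, forall u v, lnbr (G i) u = lnbr (G i) v}.
  move=> iz; have le2 u : ldeg (G i) u <= 2 by rewrite (inv i iz).1.1.
  rewrite -(deg2G i iz); apply: (elimT (butterflies_maxP le2)).
  by rewrite (inv i iz).2 deg2G // bflyEb.
have card_lnbr i : i <= z -> #|lnbr (G i) u0| = 2.
  by move=> iz; apply/eqP; move: u0D; rewrite -(deg2G i iz) inE.
have [l lz neql] := exists_step_neq (f := fun i => lnbr (G i) u0) neq0z.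
exists l => //; apply: leq_trans (bso_step_card_diff (step l lz)).
apply: card_shared_lnbr_le_removed neql.
- by move=> u uD; apply: twinsG; rewrite // ltnW.
- by move=> u uD; apply: twinsG.
- by rewrite !card_lnbr // ltnW.
Qed.

Lemma card_ltn_ord m k : k <= m -> #|[set u : 'I_m | u < k]| = k.
Proof.
move=> le_km; have widen_inj : injective (widen_ord le_km).
  by move=> i j eq_ij; apply: val_inj; apply: (congr1 val eq_ij).
rewrite -[RHS](card_ord k) -cardsT -(card_imset _ widen_inj).
apply: eq_card => u; rewrite inE; apply/idP/imsetP => [lt_uk | [i _ ->]].
  by exists (Ordinal lt_uk) => //; apply: val_inj.
by rewrite /= ltn_ord.
Qed.

Definition graph_of m (nb : 'I_m -> {set 'I_3}) : bgraph m 3 := [set e | e.2 \in nb e.1].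

Lemma mem_graph_of m (nb : 'I_m -> {set 'I_3}) u a : ((u, a) \in graph_of nb) = (a \in nb u).
Proof. by rewrite inE. Qed.

Lemma lnbr_graph_of m (nb : 'I_m -> {set 'I_3}) u : lnbr (graph_of nb) u = nb u.
Proof. by apply/setP => a; rewrite !inE. Qed.

Lemma rdeg_graph_of m (nb : 'I_m -> {set 'I_3}) a :
  rdeg (graph_of nb) a = #|[set u | a \in nb u]|.
Proof. by apply: eq_card => u; rewrite !inE. Qed.

Lemma ldeg_perm m n (E1 E2 : bgraph m n) (f : {perm 'I_m}) (g : {perm 'I_n}) :
  (forall u a, ((u, a) \in E1) = ((f u, g a) \in E2)) ->
  forall u, ldeg E1 u = ldeg E2 (f u).
Proof.
move=> iso u; rewrite !ldeg_lnbr -(card_preimset (lnbr E2 (f u)) (@perm_inj _ g)).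
by apply: eq_card => a; rewrite !inE iso.
Qed.

Section Construction.

Variable P : nat.

Local Notation low := [set u : 'I_(P+P).+1 | u < P].

Definition nbr_b (u : 'I_(P+P).+1) : {set 'I_3} :=
  if u < P then [set~ ord_max] else [set ord_max].

Definition nbr_e (u : 'I_(P+P).+1) : {set 'I_3} :=
  if u < P then [set~ ord0] else if u == ord_max then [set ord_max] else [set ord0].

Definition Gb := graph_of nbr_b.
Definition Ge := graph_of nbr_e.

Lemma ldeg_Gb u : ldeg Gb u = if u < P then 2 else 1.
Proof.
by rewrite ldeg_lnbr lnbr_graph_of /nbr_b; case: ifP; rewrite ?cardsC1 ?card_ord ?cards1.
Qed.

Lemma ldeg_Gb_le2 u : ldeg Gb u <= 2.
Proof. by rewrite ldeg_Gb; case: ifP. Qed.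

Lemma ldeg_Ge u : ldeg Ge u = ldeg Gb u.
Proof.
rewrite ldeg_Gb ldeg_lnbr lnbr_graph_of /nbr_e.
by case: ifP; rewrite ?cardsC1 ?card_ord // -fun_if cards1.
Qed.

Lemma deg2_Gb : deg2 Gb = low.
Proof. by apply/setP => u; rewrite !inE ldeg_Gb; case: ifP. Qed.

Lemma deg2_Ge : deg2 Ge = low.
Proof. by rewrite -deg2_Gb; apply/setP => u; rewrite !inE ldeg_Ge. Qed.

Lemma card_low : #|low| = P.
Proof. by rewrite card_ltn_ord // leqW // leq_addr. Qed.

Lemma rdeg_Ge a : rdeg Ge a = rdeg Gb a.
Proof.
have max_low : (ord_max : 'I_(P+P).+1) \notin low by rewrite inE -leqNgt leq_addr.
have card_max_low : #|ord_max |: low| = P.+1 by rewrite cardsU1 max_low card_low.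
have card_notlow : #|~: low| = P.+1.
  by rewrite cardsCs setCK card_ord card_low subSn ?leq_addr // addnK.
have card_notmax_low : #|~: (ord_max |: low)| = P.
  by rewrite cardsCs setCK card_ord card_max_low subSS addnK.
rewrite !rdeg_graph_of.
have [-> | a_ne0] := eqVneq a ord0.
  have -> : [set u | ord0 \in nbr_e u] = ~: (ord_max |: low).
    apply/setP => u; rewrite !inE /nbr_e.
    by case: (u < P); rewrite ?inE //; case: (u == ord_max); rewrite ?inE.
  have -> : [set u | ord0 \in nbr_b u] = low.
    by apply/setP => u; rewrite !inE /nbr_b; case: (u < P); rewrite ?inE.
  by rewrite card_notmax_low card_low.
have [-> | a_nemax] := eqVneq a ord_max.
  have -> : [set u | ord_max \in nbr_e u] = ord_max |: low.
    apply/setP => u; rewrite !inE /nbr_e.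
    by case: (u < P); rewrite ?orbT ?inE //; case: (u == ord_max); rewrite ?inE.
  have -> : [set u | ord_max \in nbr_b u] = ~: low.
    by apply/setP => u; rewrite !inE /nbr_b; case: (u < P); rewrite ?inE.
  by rewrite card_max_low card_notlow.
apply: eq_card => u; rewrite !inE /nbr_e /nbr_b.
case: (u < P); rewrite ?inE ?a_ne0 ?a_nemax //.
by case: (u == ord_max); rewrite ?inE ?(negbTE a_ne0) ?(negbTE a_nemax).
Qed.

Lemma butterflies_Gb : butterflies Gb = 'C(P, 2).
Proof.
rewrite -[in RHS]card_low -deg2_Gb; apply/eqP/(butterflies_maxP ldeg_Gb_le2) => u v.
by rewrite deg2_Gb !inE !lnbr_graph_of /nbr_b => -> ->.
Qed.

Lemma butterflies_Ge : butterflies Ge = 'C(P, 2).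
Proof.
have ldeg_le2 u : ldeg Ge u <= 2 by rewrite ldeg_Ge ldeg_Gb_le2.
rewrite -[in RHS]card_low -deg2_Ge; apply/eqP/(butterflies_maxP ldeg_le2) => u v.
by rewrite deg2_Ge !inE !lnbr_graph_of /nbr_e => -> ->.
Qed.

Lemma Gb_Ge_not_bisomorphic : 0 < P -> ~ bisomorphic Gb Ge.
Proof.
move=> P_gt0 [f [g iso]].
(* [f] pulls the pendant left nodes of [Ge] back to pendant nodes of [Gb], all of
   which hang at [ord_max]; so [g ord_max] would be the common neighbour of the
   pendant nodes [P] and [2P] of [Ge]. *)
have nbr_e_pendant (v : 'I_(P+P).+1) : P <= v -> g ord_max \in nbr_e v.
  move=> le_Pv; have fK : f ((f^-1)%g v) = v := permKV f v.
  have := ldeg_perm iso ((f^-1)%g v); rewrite fK ldeg_Ge !ldeg_Gb (ltnNge v) le_Pv.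
  case: ltnP => // le_Pw _.
  by rewrite -mem_graph_of -/Ge -fK -iso mem_graph_of /nbr_b ltnNge le_Pw inE.
have lt_P : P < (P+P).+1 by rewrite ltnS leq_addr.
have := nbr_e_pendant (Ordinal lt_P) (leqnn P).
have := nbr_e_pendant ord_max (leq_addr P P).
have P_ne_max : (Ordinal lt_P == ord_max) = false.
  by apply: ltn_eqF; rewrite /= -[P in P < _]addn0 ltn_add2l.
by rewrite /nbr_e /= !ltnn ltnNge leq_addr eqxx P_ne_max !inE => /eqP->.
Qed.

End Construction.

Theorem theorem1 :
  forall qbar : nat, 1 < qbar ->
  exists (m n : nat) (Eb Ee : bgraph m n),
    ~ bisomorphic Eb Ee /\ same_degseqs Eb Ee /\ butterflies Eb = butterflies Ee /\
    forall (z : nat) (G : nat -> bgraph m n) (p : nat -> nat),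
      G 0 = Eb -> G z = Ee ->
      (forall i, i < z -> 0 < p i /\ bso_step (G i) (p i) (G i.+1)) ->
      (forall i, i <= z -> same_degseqs (G i) Eb /\ butterflies (G i) = butterflies Eb) ->
      exists l, l < z /\ qbar <= p l.
Proof.
move=> P P_gt1; have P_gt0 : 0 < P := ltnW P_gt1.
exists (P+P).+1, 3, (Gb P), (Ge P).
split; first exact: Gb_Ge_not_bisomorphic.
split; first by split=> [u | a]; rewrite (ldeg_Ge, rdeg_Ge).
split; first by rewrite butterflies_Gb butterflies_Ge.
move=> z G p G0 Gz step inv.
have low0 : ord0 \in deg2 (Gb P) by rewrite deg2_Gb inE.
have bfly : butterflies (Gb P) = 'C(#|deg2 (Gb P)|, 2).
  by rewrite deg2_Gb card_low butterflies_Gb.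
have moved0 : lnbr (G 0) ord0 != lnbr (G z) ord0.
  rewrite G0 Gz !lnbr_graph_of /nbr_b /nbr_e /= P_gt0.
  by apply/eqP => /setP/(_ ord0); rewrite !inE.
have [l lz] := bso_walk_large_step (@ldeg_Gb_le2 P) bfly
  (fun i iz => (step i iz).2) inv low0 moved0.
by rewrite deg2_Gb card_low; exists l.
Qed.
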